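(* Let $n \ge 4$, let $\lambda = (\lambda_1,\lambda_2)$ with integers $\lambda_1 \ge \lambda_2 \ge 0$, and let $(\lambda, i, j, k)$ be an admissible tuple. Then the function $\psi_{\lambda,(i,j,k)} \colon \mathcal{I}_2 \to V$ is $\mathrm{O}(n)$-equivariant, i.e. $\psi_{\lambda,(i,j,k)}(gJ) = \pi(g)\psi_{\lambda,(i,j,k)}(J)$ for all $g \in \mathrm{O}(n)$ and $J \in \mathcal{I}_2$.
   Context: Setting. Fix an angle $\theta$ and consider the graph on $S^{n-1}$ in which distinct $x,y$ are adjacent if $\langle x,y\rangle > \cos\theta$; $\mathcal{I}_2$ is the set of independent sets of this graph of cardinality at most $2$ (including $\emptyset$), and $\mathcal{I}_{=i}$ those of cardinality exactly $i$. $\mathrm{O}(n)$ (real orthogonal $n\times n$ matrices) acts by $g\{x_1,\dots\} = \{gx_1,\dots\}$. $\mathrm{O}(n,\mathbb{C})$ denotes complex $n\times n$ matrices $g$ with $g^{\sf T} g = I$. Representation of $\mathrm{GL}(2)$: let $U = \mathbb{C}^2$ with basis $e_1,e_2$ and tautological action, $m = \lambda_1 - \lambda_2$, $W = \mathrm{Sym}^{\lambda_2}(\wedge^2 U)\otimes \mathrm{Sym}^m(U)$ with the induced action $\rho \colon \mathrm{GL}(2)\to \mathrm{GL}(W)$ (extended polynomially to all $2\times 2$ complex matrices), basis $w_k = (e_1\wedge e_2)^{\lambda_2} e_1^{m-k} e_2^k$, $k = 0,\dots,m$, and inner product making this basis orthonormal. Put $c_1(k) = \lambda_2 + m - k$,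 $c_2(k) = \lambda_2 + k$. Induced representation of $\mathrm{O}(n)$: let $\omega = (I_2 \ \ iI_2 \ \ 0)$ (a $2\times n$ complex matrix) and $\epsilon = \binom{I_2}{0}$ (an $n \times 2$ matrix). For $w \in W$ define $f_w \colon \mathrm{O}(n,\mathbb{C}) \to W$, $f_w(\gamma) = \rho(\omega\gamma\epsilon)w$, and let $V = \mathrm{span}\{R_g f_w : g \in \mathrm{O}(n,\mathbb{C}), w\in W\}$ where $(R_g f)(\gamma) = f(\gamma g)$; $\pi$ is the representation of $\mathrm{O}(n)$ on $V$ by right translation, with inner product $\langle f_1,f_2\rangle = \int_{\mathrm{O}(n)} \langle f_1(\gamma), f_2(\gamma)\rangle\, d\gamma$ (normalized Haar measure). Let $\Psi(w) = f_w$. Orbit representatives and section: for $J\in\mathcal{I}_2$ with $|J|\ge 1$ write $J = \{x,y\}$ (with $x=y$ if $|J|=1$) and put $p_j(J) = \langle x,y\rangle^j$, $q_1(J) = \sqrt{2+2\langle x,y\rangle}$, $q_2(J) = \sqrt{2 - 2\langle x,y\rangle}$; the representative of the orbit $\mathrm{O}(n)J$ is $R_J = \{(q_1(J)/2, q_2(J)/2, 0,\dots,0), (q_1(J)/2, -q_2(J)/2,0,\dots,0)\}$ (so $e_1$ for singletons), and of $\mathcal{I}_{=0}$ is $\emptyset$. A section is a map $s \colon \mathcal{I}_2 \to \mathrm{O}(n)$ with $s(J)R_J = J$. Admissible tuples $(\lambda,i,j,k)$: for $i=0$: $\lambda = (0,0)$, $j=k=0$; for $i=1$: $\lambda_2 =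 0$, $j = k = 0$; for $i = 2$: any $\lambda$, $j\ge 0$, $0\le k\le \lambda_1-\lambda_2$ with $\lambda_2 + k$ even. Equivariant functions: $\psi_{\lambda,(i,j,k)}(J) = \xi_{\lambda,i,j,k}(J)\,\pi(s(J))\Psi(w_k)$, where $\xi_{\lambda,i,j,k}(J) = 1$ if $i = |J| < 2$, $\xi_{\lambda,i,j,k}(J) = p_j(J) q_1(J)^{c_1(k)} q_2(J)^{c_2(k)}$ if $i = |J| = 2$, and $0$ otherwise (with $0^0 = 1$). *)

From HB Require Import structures.
From mathcomp Require Import all_boot all_order all_algebra.
From mathcomp Require Import finmap.
From mathcomp Require Import complex.
From mathcomp Require Import mpoly.
From mathcomp Require Import all_classical all_reals all_analysis.

Set Implicit Arguments.
Unset Strict Implicit.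
Unset Printing Implicit Defensive.

Import Order.TTheory GRing.Theory Num.Theory.
Local Open Scope ring_scope.


Notation Cx R := (complex R).
Notation Wty R := (mpoly.mpoly 2 (complex R)).

Section Defs.
Variables (R : realType) (n : nat).

Definition toC (r : R) : Cx R := Complex r 0.
Definition iC : Cx R := Complex 0 1.

Definition dot (x y : 'cV[R]_n) : R := (x^T *m y) 0 0.

Definition on_sphere (x : 'cV[R]_n) : bool := dot x x == 1.

Definition in_On (g : 'M[R]_n) : bool := g^T *m g == 1%:M.

Definition in_OnC (g : 'M[Cx R]_n) : bool := g^T *m g == 1%:M.

(* I_2 for the graph on S^{n-1} with x ~ y iff x <> y and <x,y> > cos theta *)
Definition indep2 (theta : R) (J : {fset 'cV[R]_n}) : Prop :=
  [/\ (#|` J| <= 2)%N,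
      (forall x, x \in J -> on_sphere x) &
      (forall x y, x \in J -> y \in J -> x != y -> ~ (cos theta < dot x y))].

Definition act (g : 'M[R]_n) (J : {fset 'cV[R]_n}) : {fset 'cV[R]_n} :=
  [fset g *m x | x in J]%fset.

(* <x,y> where J = {x,y} (with x = y if |J| = 1); 0 (unused) if J is empty *)
Definition ipJ (J : {fset 'cV[R]_n}) : R :=
  match enum_fset J with
  | [:: x] => dot x x
  | [:: x; y] => dot x y
  | _ => 0
  end.

Definition pJ (j : nat) (J : {fset 'cV[R]_n}) : R := ipJ J ^+ j.
Definition q1 (J : {fset 'cV[R]_n}) : R := Num.sqrt (2 + 2 * ipJ J).
Definition q2 (J : {fset 'cV[R]_n}) : R := Num.sqrt (2 - 2 * ipJ J).

Definition vec2 (a b : R) : 'cV[R]_n :=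
  \col_i (if nat_of_ord i == 0%N then a else if nat_of_ord i == 1%N then b else 0).

(* orbit representative R_J *)
Definition repJ (J : {fset 'cV[R]_n}) : {fset 'cV[R]_n} :=
  if J == fset0%fset then fset0%fset
  else [fset vec2 (q1 J / 2) (q2 J / 2); vec2 (q1 J / 2) (- (q2 J / 2))]%fset.

Definition is_section (theta : R) (s : {fset 'cV[R]_n} -> 'M[R]_n) : Prop :=
  forall J, indep2 theta J -> in_On (s J) /\ act (s J) (repJ J) = J.

(* W = Sym^{l2}(wedge^2 U) (x) Sym^m(U).  Sym^{l2}(wedge^2 U) is the line
   spanned by (e1/\e2)^{l2}, on which A acts by det(A)^{l2}; Sym(U) is
   realized as polynomials in X_0 (= e1), X_1 (= e2). *)

Definition Xv (i : 'I_2) : Wty R := mpoly.mpolyX (Cx R) (mpoly.mX i).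

Definition rho (l2 : nat) (A : 'M[Cx R]_2) (w : Wty R) : Wty R :=
  let Ae1 : Wty R := A 0 0 *: Xv 0 + A 1 0 *: Xv 1 in
  let Ae2 : Wty R := A 0 1 *: Xv 0 + A 1 1 *: Xv 1 in
  (\det A ^+ l2) *: mpoly.comp_mpoly [tuple Ae1; Ae2] w.

(* basis vector w_k = (e1/\e2)^{l2} e1^{m-k} e2^k *)
Definition wk (m k : nat) : Wty R := Xv 0 ^+ (m - k) * Xv 1 ^+ k.

(* omega = (I_2  i I_2  0) and epsilon = (I_2 ; 0) *)
Definition omega : 'M[Cx R]_(2, n) :=
  \matrix_(a < 2, b < n)
    (if nat_of_ord b == nat_of_ord a then 1
     else if nat_of_ord b == (nat_of_ord a + 2)%N then iC else 0).
Definition epsilon : 'M[Cx R]_(n, 2) :=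
  \matrix_(a < n, b < 2) (if nat_of_ord a == nat_of_ord b then 1 else 0).

Definition Psi (l2 : nat) (w : Wty R) : 'M[Cx R]_n -> Wty R :=
  fun gamma => rho l2 (omega *m gamma *m epsilon) w.

Definition toCmx (g : 'M[R]_n) : 'M[Cx R]_n := map_mx toC g.

Definition pi_act (g : 'M[R]_n) (f : 'M[Cx R]_n -> Wty R) : 'M[Cx R]_n -> Wty R :=
  fun gamma => f (gamma *m toCmx g).

Definition admissible (l1 l2 i j k : nat) : bool :=
  [|| [&& i == 0%N, l1 == 0%N, l2 == 0%N, j == 0%N & k == 0%N],
      [&& i == 1%N, l2 == 0%N, j == 0%N & k == 0%N]
    | [&& i == 2%N, (k <= l1 - l2)%N & ~~ odd (l2 + k)]].

Definition c1 (l1 l2 k : nat) : nat := (l2 + (l1 - l2) - k)%N.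
Definition c2 (l2 k : nat) : nat := (l2 + k)%N.

Definition xi (l1 l2 i j k : nat) (J : {fset 'cV[R]_n}) : R :=
  if (i == #|` J|) && (i < 2)%N then 1
  else if (i == #|` J|) && (i == 2%N) then
    pJ j J * q1 J ^+ c1 l1 l2 k * q2 J ^+ c2 l2 k
  else 0.

Definition psi (s : {fset 'cV[R]_n} -> 'M[R]_n) (l1 l2 i j k : nat)
  (J : {fset 'cV[R]_n}) : 'M[Cx R]_n -> Wty R :=
  fun gamma => toC (xi l1 l2 i j k J) *: pi_act (s J) (Psi l2 (wk (l1 - l2) k)) gamma.

End Defs.

From HB Require Import structures.
From mathcomp Require Import all_boot all_order all_algebra.
From mathcomp Require Import finmap.
From mathcomp Require Import complex.
From mathcomp Require Import mpoly.
From mathcomp Require Import all_classical all_reals all_analysis.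
From mathcomp Require Import ring lra.
Import Order.TTheory GRing.Theory Num.Theory.
Local Open Scope ring_scope.

(* Put S = s(gJ) and T = s(J). Both g T and S carry the representative R_J
   onto gJ, so h = S^T g T is orthogonal and stabilises
   R_J = {(c, d, 0, ..), (c, -d, 0, ..)}. Such an h fixes e_1 when c <> 0 and
   sends e_2 to +-e_2 when d <> 0; hence right translation by h multiplies the
   two columns of omega gamma epsilon by 1 and +-1, and rho(.) w_k by
   (+-1)^(lambda_2 + k) = 1. When c = 0 (an antipodal pair) or d = 0 (a
   singleton), xi is nonzero only if the exponent c_1, resp. c_2, vanishes,
   so the undetermined column never enters. Finally xi(gJ) = xi(J), as xi
   only depends on |J| and <x, y>. *)

Set Implicit Arguments.
Unset Strict Implicit.
Unset Printing Implicit Defensive.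

Lemma mX_mnm1 p (i : 'I_p) : mX i = mnm1 i.
Proof. by apply/mnmP => j; rewrite mnm1E /mX mnmE eq_sym. Qed.

Lemma col_mulmx (K : nzRingType) p q r (A : 'M[K]_(p, q)) (B : 'M[K]_(q, r)) j :
  col j (A *m B) = A *m col j B.
Proof. by rewrite !colE mulmxA. Qed.

Lemma add_sub_eq (F : fieldType) (V : lmodType F) (x y x' y' : V) :
  2%:R != 0 :> F -> x + y = x' + y' -> x - y = x' - y' -> x = x' /\ y = y'.
Proof.
move=> two_neq0 sum_eq diff_eq.
have x_eq : x = x'.
  have double (z w : V) : z *+ 2 = (z + w) + (z - w) by rewrite addrACA subrr addr0 mulr2n.
  apply: (scalerI two_neq0); rewrite !scaler_nat.
  by rewrite (double x y) (double x' y') sum_eq diff_eq.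
by split=> //; move: sum_eq; rewrite x_eq => /addrI.
Qed.

Section Rho.
Variable R : realType.
Implicit Types (A B : 'M[Cx R]_2).

Definition col_poly A (j : 'I_2) : Wty R := A 0 j *: Xv R 0 + A 1 j *: Xv R 1.

Lemma rho_wk l2 m k A :
  rho l2 A (wk R m k) = \det A ^+ l2 *: (col_poly A 0 ^+ (m - k) * col_poly A 1 ^+ k).
Proof.
by rewrite /rho /wk /col_poly rmorphM /= !rmorphXn /= /Xv !mX_mnm1 !comp_mpolyXU.
Qed.

Lemma col_polyZ A B j a :
  col j B = a *: col j A -> col_poly B j = a *: col_poly A j.
Proof.
move/colP=> eqBA; have entry i : B i j = a * A i j by have := eqBA i; rewrite !mxE.
by rewrite /col_poly !entry scalerDr !scalerA.
Qed.

Lemma rho_wk_scale_cols l2 m k A B (a0 a1 : Cx R) :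
  ((l2 + (m - k) != 0)%N -> col 0 B = a0 *: col 0 A) ->
  ((l2 + k != 0)%N -> col 1 B = a1 *: col 1 A) ->
  rho l2 B (wk R m k) = (a0 ^+ (l2 + (m - k)) * a1 ^+ (l2 + k)) *: rho l2 A (wk R m k).
Proof.
move=> col0 col1.
have col_polyX j e a : ((e != 0)%N -> col j B = a *: col j A) ->
    col_poly B j ^+ e = a ^+ e *: col_poly A j ^+ e.
  case: e => [|e] colj; first by rewrite !expr0 scale1r.
  by rewrite (col_polyZ (colj isT)) exprZn.
have detX : \det B ^+ l2 = (a0 * a1) ^+ l2 * \det A ^+ l2.
  case: l2 col0 col1 => [|l2] col0 col1; first by rewrite !expr0 mulr1.
  have -> : B = A *m diag_mx (\row_j (if j == 0 then a0 else a1)).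
    apply/matrixP => i j; rewrite mul_mx_diag !mxE.
    move: (col0 isT) (col1 isT) => /colP/(_ i) B0 /colP/(_ i) B1.
    have [->|->] : j = 0 \/ j = 1 by case: j => [[|[|//]] ?]; [left|right]; apply/val_inj.
    - by move: B0; rewrite !mxE => ->; rewrite mulrC.
    - by move: B1; rewrite !mxE => ->; rewrite mulrC.
  by rewrite det_mulmx det_diag !big_ord_recl big_ord0 !mxE /= mulr1 -exprMn mulrC.
rewrite !rho_wk detX (col_polyX 0 (m - k)%N a0) ?(col_polyX 1 k a1); last 2 first.
- by move=> k_neq0; apply: col1; rewrite addn_eq0 negb_and k_neq0 orbT.
- by move=> mk_neq0; apply: col0; rewrite addn_eq0 negb_and mk_neq0 orbT.
rewrite -scalerAl -scalerAr !scalerA; congr (_ *: _).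
by rewrite !exprD exprMn; ring.
Qed.

End Rho.

Section Orthogonal.
Variables (R : realType) (n : nat).
Implicit Types (g h : 'M[R]_n) (x y : 'cV[R]_n) (J : {fset 'cV[R]_n}).

Lemma dotC x y : dot x y = dot y x.
Proof. by rewrite /dot -[x^T *m y]trmxK trmx_mul trmxK mxE. Qed.

Lemma dot_mulmx g x y : in_On g -> dot (g *m x) (g *m y) = dot x y.
Proof. by move/eqP=> gO; rewrite /dot trmx_mul -mulmxA (mulmxA g^T) gO mul1mx. Qed.

Lemma in_On_trmx g : in_On g -> in_On g^T.
Proof. by move/eqP=> gO; apply/eqP; rewrite trmxK; apply: mulmx1C. Qed.

Lemma in_OnM g h : in_On g -> in_On h -> in_On (g *m h).
Proof.
move=> /eqP gO /eqP hO; apply/eqP.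
by rewrite trmx_mul -mulmxA (mulmxA g^T) gO mul1mx.
Qed.

Lemma in_On_inj g : in_On g -> injective (mulmx g : 'cV[R]_n -> 'cV[R]_n).
Proof. by move/eqP=> gO x y /(congr1 (mulmx g^T)); rewrite !mulmxA gO !mul1mx. Qed.

Lemma act_mulmx g h J : act (g *m h) J = act g (act h J).
Proof.
by rewrite /act -imfset_comp; apply: eq_imfset => // x; rewrite /= mulmxA.
Qed.

Lemma act1 J : act 1%:M J = J.
Proof. by rewrite /act -[RHS]imfset_id; apply: eq_imfset => // x; rewrite mul1mx. Qed.

Lemma mem_act g J x : x \in J -> g *m x \in act g J.
Proof. by move=> xJ; apply/imfsetP; exists x. Qed.

Lemma card_act g J : in_On g -> #|` act g J| = #|` J|.
Proof. by move=> gO; rewrite card_imfset //; apply: in_On_inj. Qed.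

Lemma ipJ_card1 J x : #|` J| = 1%N -> x \in J -> ipJ J = dot x x.
Proof.
rewrite /ipJ -[x \in J]/(x \in enum_fset J).
by case: (enum_fset J) => [|y [|]] //= _; rewrite inE => /eqP->.
Qed.

Lemma ipJ_card2 J x y : #|` J| = 2%N -> x \in J -> y \in J -> x != y ->
  ipJ J = dot x y.
Proof.
rewrite /ipJ -[x \in J]/(x \in enum_fset J) -[y \in J]/(y \in enum_fset J).
have := fset_uniq J; case: (enum_fset J) => [|a [|b [|]]] //= /andP[].
rewrite !inE => ab _ _ /orP[]/eqP-> /orP[]/eqP->; rewrite ?eqxx // => _; exact: dotC.
Qed.

Lemma ipJ_act g J : in_On g -> ipJ (act g J) = ipJ J.
Proof.
move=> gO; have cardE := card_act J gO.
rewrite {2}/ipJ; case E: (enum_fset J) => [|x [|y [|z t]]].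
- have /cardfs0_eq -> : #|` J| = 0%N by rewrite E.
  by rewrite /act imfset0.
- have xJ : x \in J by rewrite -[x \in J]/(x \in enum_fset J) E inE.
  by rewrite (ipJ_card1 _ (mem_act g xJ)) ?dot_mulmx // cardE E.
- have xJ : x \in J by rewrite -[x \in J]/(x \in enum_fset J) E !inE eqxx.
  have yJ : y \in J by rewrite -[y \in J]/(y \in enum_fset J) E !inE eqxx orbT.
  have xy : x != y by have := fset_uniq J; rewrite E /= !inE andbT.
  rewrite (ipJ_card2 _ (mem_act g xJ) (mem_act g yJ)) ?dot_mulmx //.
  + by rewrite cardE E.
  + by apply: contra xy => /eqP/(in_On_inj gO)->.
- have : size (enum_fset (act g J)) = size (enum_fset J) by [].
  by rewrite /ipJ E; case: (enum_fset (act g J)) => [|? [|? [|]]].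
Qed.

Lemma indep2_act theta g J : in_On g -> indep2 theta J -> indep2 theta (act g J).
Proof.
move=> gO [cardJ sphJ farJ]; split; first by rewrite card_act.
- by move=> _ /imfsetP[x xJ ->]; rewrite /on_sphere dot_mulmx //; apply: sphJ.
- move=> _ _ /imfsetP[x xJ ->] /imfsetP[y yJ ->] gxy; rewrite dot_mulmx //.
  by apply: farJ => //; apply: contra gxy => /eqP->.
Qed.

Lemma repJ_act g J : in_On g -> repJ (act g J) = repJ J.
Proof. by move=> gO; rewrite /repJ /q1 /q2 ipJ_act // -!cardfs_eq0 card_act. Qed.

Lemma xi_act l1 l2 i j k g J : in_On g -> xi l1 l2 i j k (act g J) = xi l1 l2 i j k J.
Proof. by move=> gO; rewrite /xi /pJ /q1 /q2 card_act // ipJ_act. Qed.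

Lemma section_stabilizer theta s g J :
  is_section theta s -> in_On g -> indep2 theta J ->
  exists2 h, in_On h /\ act h (repJ J) = repJ J & g *m s J = s (act g J) *m h.
Proof.
move=> sec gO JI; have [S1O S1R] := sec _ (indep2_act gO JI); have [S2O S2R] := sec _ JI.
rewrite repJ_act // in S1R; have /eqP S1V := in_On_trmx S1O; rewrite trmxK in S1V.
exists ((s (act g J))^T *m g *m s J); last by rewrite !mulmxA S1V mul1mx.
split; first by rewrite !in_OnM // in_On_trmx.
by rewrite !act_mulmx S2R -{2}S1R -act_mulmx (eqP S1O) act1.
Qed.

Definition epsR : 'M[R]_(n, 2) := \matrix_(a, b) ((a : nat) == b)%:R.

Lemma epsilonE : epsilon R n = map_mx (real_complex R) epsR.
Proof. by apply/matrixP => a b; rewrite !mxE; case: eqP. Qed.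

Lemma vec2E a b : vec2 n a b = a *: col 0 epsR + b *: col 1 epsR.
Proof.
apply/matrixP => i l; rewrite !mxE.
by case: i => [[|[|i]] ?] /=; rewrite ?mulr1 ?mulr0 ?addr0 ?add0r.
Qed.

Lemma mulmx_vec2 h a b :
  h *m vec2 n a b = a *: (h *m col 0 epsR) + b *: (h *m col 1 epsR).
Proof. by rewrite vec2E mulmxDr -!scalemxAr. Qed.

Lemma vec2_pair_stabilizer h c d : (1 < n)%N -> in_On h ->
  act h [fset vec2 n c d; vec2 n c (- d)]%fset = [fset vec2 n c d; vec2 n c (- d)]%fset ->
  exists2 s : R, s ^+ 2 = 1 &
    (c != 0 -> h *m col 0 epsR = col 0 epsR) /\
    (d != 0 -> h *m col 1 epsR = s *: col 1 epsR).
Proof.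
move=> n_gt1 hO stab; set u := vec2 n c d; set v := vec2 n c (- d).
have stabP w : w \in [fset u; v]%fset -> h *m w \in [fset u; v]%fset.
  by move=> wuv; rewrite -stab; apply: mem_act.
have /stabP hu := fset21 u v; have /stabP hv := fset22 u v.
suff [c_eq [s s2 d_eq]] : c *: (h *m col 0 epsR) = c *: col 0 epsR /\
    exists2 s : R, s ^+ 2 = 1 & d *: (h *m col 1 epsR) = d *: (s *: col 1 epsR).
  by exists s => //; split=> nz; apply: (scalerI nz).
have two_neq0 : 2%:R != 0 :> R by rewrite pnatr_eq0.
have [d0 | dn0] := eqVneq d 0.
  move: hu; rewrite /u /v d0 oppr0 !inE orbb mulmx_vec2 vec2E => /eqP.
  rewrite !scale0r !addr0 => c_eq; split=> //.
  by exists 1; rewrite ?expr1n // !scale0r.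
have uv : u != v.
  apply/eqP => /colP/(_ (Ordinal n_gt1)); rewrite !mxE /= => d_eq.
  by move/eqP: dn0; apply; lra.
have huv : h *m u != h *m v by apply: contra uv => /eqP/(in_On_inj hO)->.
move: hu hv huv; rewrite !inE => /orP[]/eqP hu /orP[]/eqP hv; rewrite hu hv ?eqxx // => _.
  move: hu hv; rewrite /u /v !mulmx_vec2 !vec2E !scaleNr => hu hv.
  have [c_eq d_eq] := add_sub_eq two_neq0 hu hv.
  by split=> //; exists 1; rewrite ?expr1n ?scale1r.
move: hu hv; rewrite /u /v !mulmx_vec2 !vec2E !scaleNr => hu.
have := add_sub_eq two_neq0 hu; rewrite opprK => /[apply] -[c_eq d_eq].
by split=> //; exists (-1); rewrite ?sqrrN ?expr1n // scaleN1r scalerN.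
Qed.

End Orthogonal.

Section Equivariance.
Variables (R : realType) (n : nat).
Local Notation epsR := (epsR R n).

Lemma toCmxM (g h : 'M[R]_n) : toCmx (g *m h) = toCmx g *m toCmx h.
Proof. exact: (map_mxM (real_complex R)). Qed.

Lemma Psi_wk_mulmx_diag l2 m k (h : 'M[R]_n) (a0 a1 : R) gamma :
  ((l2 + (m - k) != 0)%N -> h *m col 0 epsR = a0 *: col 0 epsR) ->
  ((l2 + k != 0)%N -> h *m col 1 epsR = a1 *: col 1 epsR) ->
  Psi l2 (wk R m k) (gamma *m toCmx h) =
    real_complex R (a0 ^+ (l2 + (m - k)) * a1 ^+ (l2 + k)) *: Psi l2 (wk R m k) gamma.
Proof.
move=> col0 col1; rewrite /Psi /toCmx -[@toC R]/(real_complex R) epsilonE.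
rewrite mulmxA -(mulmxA _ (map_mx _ h)) -map_mxM; set Mo := omega R n *m gamma.
have colZ j a : h *m col j epsR = a *: col j epsR ->
    col j (Mo *m map_mx (real_complex R) (h *m epsR)) =
    real_complex R a *: col j (Mo *m map_mx (real_complex R) epsR).
  by move=> hcol; rewrite !col_mulmx -!map_col col_mulmx hcol map_mxZ scalemxAr.
rewrite (rho_wk_scale_cols (A := Mo *m map_mx (real_complex R) epsR)
  (a0 := real_complex R a0) (a1 := real_complex R a1)).
- by rewrite rmorphM !rmorphXn.
- by move/col0/colZ.
- by move/col1/colZ.
Qed.

Lemma Psi_wk_stabilizer_repJ l2 m k (h : 'M[R]_n) (J : {fset 'cV[R]_n}) gamma :
  (1 < n)%N -> in_On h -> act h (repJ J) = repJ J -> J != fset0%fset ->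
  q1 J != 0 \/ (l2 + (m - k) = 0)%N -> q2 J != 0 \/ (l2 + k = 0)%N -> ~~ odd (l2 + k) ->
  Psi l2 (wk R m k) (gamma *m toCmx h) = Psi l2 (wk R m k) gamma.
Proof.
move=> n_gt1 hO + Jn0 q1J q2J ev; rewrite /repJ (negbTE Jn0) => stab.
have [s s2 [fix0 fix1]] := vec2_pair_stabilizer n_gt1 hO stab.
have half_neq0 (q : R) : q != 0 -> q / 2 != 0.
  by move=> ?; rewrite mulf_eq0 invr_eq0 pnatr_eq0 orbF.
rewrite (Psi_wk_mulmx_diag (a0 := 1) (a1 := s)).
- rewrite expr1n mul1r -(odd_double_half (l2 + k)) (negbTE ev) add0n -mul2n exprM s2.
  by rewrite expr1n rmorph1 scale1r.
- by case: q1J => [q1J _ | -> //]; rewrite scale1r; apply/fix0/half_neq0.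
- by case: q2J => [q2J _ | -> //]; apply/fix1/half_neq0.
Qed.

Lemma xi_fset0_neq0 l1 l2 i j k : admissible l1 l2 i j k ->
  xi l1 l2 i j k (fset0 : {fset 'cV[R]_n}) != 0 -> [/\ l1 = 0, l2 = 0 & k = 0]%N.
Proof.
rewrite /xi cardfs0 /admissible.
by case/or3P => [/and5P[_ /eqP-> /eqP-> _ /eqP->] // | /and4P[/eqP-> _ _ _]
                | /and3P[/eqP-> _ _]]; rewrite ?eqxx.
Qed.

Lemma xi_neq0_exponents (theta : R) l1 l2 i j k (J : {fset 'cV[R]_n}) :
  (l2 <= l1)%N -> admissible l1 l2 i j k -> indep2 theta J -> J != fset0%fset ->
  xi l1 l2 i j k J != 0 ->
  [/\ q1 J != 0 \/ (l2 + (l1 - l2 - k) = 0)%N, q2 J != 0 \/ (l2 + k = 0)%N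
    & ~~ odd (l2 + k)].
Proof.
move=> l21 + [_ sphJ _]; rewrite -cardfs_eq0 /xi /admissible => + Jn0.
case/or3P => [/and5P[/eqP-> _ _ _ _] | /and4P[/eqP-> /eqP-> _ /eqP->]
             | /and3P[/eqP-> k_le ev]].
- by rewrite [(0 == _)%N]eq_sym (negbTE Jn0) /= eqxx.
- have [cardJ _ | _] := eqVneq 1%N #|` J|; last by rewrite /= eqxx.
  have /cardfs1P[x Jx] : #|` J| == 1%N by rewrite -cardJ.
  have xJ : x \in J by rewrite Jx fset11.
  have ipJ1 : ipJ J = 1 by rewrite (ipJ_card1 (esym cardJ) xJ); apply/eqP/sphJ.
  split; [left | by right | by []].
  by rewrite /q1 ipJ1 sqrtr_eq0 -ltNge; lra.
- have [cardJ | _] := eqVneq 2%N #|` J|; last by rewrite /= eqxx.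
  rewrite /= !mulf_eq0 !negb_or => /andP[/andP[_ q1n] q2n].
  rewrite /c1 -addnBA // in q1n; move: q1n q2n; rewrite !expf_eq0 !negb_and -!leqNgt !leqn0.
  by case/orP=> [/eqP ?|?] /orP[/eqP ?|?]; split=> //; by [left|right].
Qed.

End Equivariance.

Theorem mainTheorem5 (R : realType) (theta : R) (n : nat) (l1 l2 i j k : nat)
  (s : {fset 'cV[R]_n} -> 'M[R]_n) :
  (4 <= n)%N -> (l2 <= l1)%N -> admissible l1 l2 i j k ->
  is_section theta s ->
  forall (g : 'M[R]_n) (J : {fset 'cV[R]_n}),
    in_On g -> indep2 theta J ->
    forall gamma : 'M[Cx R]_n, in_OnC gamma ->
      psi s l1 l2 i j k (act g J) gamma = pi_act g (psi s l1 l2 i j k J) gamma.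
Proof.
move=> n_ge4 l21 adm sec g J gO JI gamma _.
rewrite /psi /pi_act xi_act; last by [].
have [-> | xi_neq0] := eqVneq (xi l1 l2 i j k J) 0.
  have scale_toC0 (p : Wty R) : toC 0 *: p = 0.
    by rewrite -[@toC R 0]/(real_complex R 0) rmorph0 scale0r.
  by rewrite [LHS]scale_toC0 [RHS]scale_toC0.
suff -> : Psi l2 (wk R (l1 - l2) k) (gamma *m toCmx g *m toCmx (s J)) =
          Psi l2 (wk R (l1 - l2) k) (gamma *m toCmx (s (act g J))) by [].
have [h [hO stab] gsJ] := section_stabilizer sec gO JI.
rewrite -mulmxA -toCmxM gsJ toCmxM mulmxA.
have [J0 | Jn0] := eqVneq J fset0%fset.
  move: xi_neq0; rewrite J0 => /(xi_fset0_neq0 adm) [-> -> ->].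
  rewrite (Psi_wk_mulmx_diag (a0 := 1) (a1 := 1)) ?expr0 ?mulr1 ?rmorph1 ?scale1r //.
have [q1J q2J ev] := xi_neq0_exponents l21 adm JI Jn0 xi_neq0.
by apply: Psi_wk_stabilizer_repJ hO stab Jn0 q1J q2J ev; apply: leq_trans n_ge4.
Qed.
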